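(* Let $G$ be a finite group and $p$ a prime. Let $\mathcal X^c$ be the set of $G$-conjugacy classes of $p$-selfcentralizing $p$-subgroups of $G$; sums $\sum_{[H]},\sum_{[K]}$ run over $\mathcal X^c$ and sums $\sum_H$ over $p$-selfcentralizing $p$-subgroups $H$. Then the following give, for each category, a weighting $k^{[H]}$ on $\mathcal X^c$, a coweighting $k_K$ on objects, and the Euler characteristic: (i) $\mathcal T^c_G$: $k^{[H]}=\sum_{[K]}[\mu]([H],[K])$, $k_K=|G|^{-1}\sum_H\mu(H,K)$, $\chi=\sum_{[H],[K]}[\mu]([H],[K])$; (ii) $\mathcal L^c_G$: $k^{[H]}=\sum_{[K]}[\mu]([H],[K])|C_G(K)|_{p'}$, $k_K=|G|^{-1}|C_G(K)|_{p'}\sum_H\mu(H,K)$, $\chi=\sum_{[H],[K]}[\mu]([H],[K])|C_G(K)|_{p'}$; (iii) $\mathcal F^c_G$: $k^{[H]}=\sum_{[K]}[\mu]([H],[K])|C_G(K)|$, $k_K=|G|^{-1}|C_G(K)|\sum_H\mu(H,K)$, $\chi=\sum_{[H],[K]}[\mu]([H],[K])|C_G(K)|$; (iv) $\mathcal O^c_G$: $k^{[H]}=|H|\sum_{[K]}[\mu]([H],[K])$, $k_K=|G|^{-1}\sum_H|H|\mu(H,K)$, $\chi=\sum_{[H],[K]}|H|[\mu]([H],[K])$; (v) $\widetilde{\mathcal F}^c_G$: $k^{[H]}=|H|\sum_{[K]}[\mu]([H],[K])|C_G(K)|_{p'}$, $k_K=|G|^{-1}|C_G(K)|_{p'}\sum_H|H|\mu(H,K)$,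 $\chi=\sum_{[H],[K]}|H|[\mu]([H],[K])|C_G(K)|_{p'}$.
   Context: A $p$-subgroup $H\le G$ is $p$-selfcentralizing if $Z(H)=C_H(H)$ is a Sylow $p$-subgroup of $C_G(H)$. $N_G(H,K)=\{g\in G:g^{-1}Hg\le K\}$; $O^p(X)$ is the smallest normal subgroup of $X$ with $p$-group quotient; $n_{p'}$ is the largest divisor of $n$ prime to $p$. The categories $\mathcal T^c_G,\mathcal L^c_G,\mathcal F^c_G,\mathcal O^c_G,\widetilde{\mathcal F}^c_G$ have as objects the $p$-selfcentralizing $p$-subgroups of $G$, with morphisms $N_G(H,K)$, $O^p(C_G(H))\backslash N_G(H,K)$, $C_G(H)\backslash N_G(H,K)$, $N_G(H,K)/K$, $C_G(H)\backslash N_G(H,K)/K$ respectively, composition induced by multiplication. For such $\mathcal C$, $|\mathcal C(H,K)|$ depends only on conjugacy classes; a weighting on $\mathcal X^c$ is a function $k^{[\bullet]}$ with $\sum_{[K]\in\mathcal X^c}|\mathcal C(H,K)|k^{[K]}=1$ for every object $H$; a coweighting is $k_\bullet:\mathrm{Ob}(\mathcal C)\to\mathbb Q$ with $\sum_Hk_H|\mathcal C(H,K)|=1$ for every object $K$; $\chi$ is Leinster's Euler characteristic (sum of the values of a weighting or coweighting of $\mathcal C$, when both exist). $\mu(H,K)$ is the Möbius function of the poset of all subgroups of $G$, and $[\mu]([H],[K])=|N_G(H)|^{-1}\sum_{L\in[K]}\mu(H,L)$, $[K]$ the set of $G$-conjugates of $K$. *)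

From mathcomp Require Import all_boot all_order all_algebra all_fingroup all_solvable.
Set Implicit Arguments. Unset Strict Implicit. Unset Printing Implicit Defensive.
Import GRing.Theory Num.Theory.

Local Open Scope group_scope.

Section Defs.
Variable gT : finGroupType.
Implicit Types (G X H K : {set gT}) (p : nat).

Definition Op_res p X : {set gT} :=
  \bigcap_(N : {group gT} | (N <| X) && p.-group (X / N)) (N : {set gT}).

Definition psc_obj p G H : bool :=
  [&& group_set H, H \subset G, p.-group H & p.-Sylow('C_G(H)) 'Z(H)].

Definition objs p G : {set {set gT}} := [set H | psc_obj p G H].

Definition Xc p G : {set {set {set gT}}} := [set H :^: G | H in objs p G].

Definition NGHK G H K : {set gT} := [set g in G | H :^ g \subset K].

(* cardinalities of the morphism sets *)
Definition morT G H K : nat := #|NGHK G H K|.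
Definition morL p G H K : nat :=
  #|[set Op_res p 'C_G(H) :* g | g in NGHK G H K]|.
Definition morF G H K : nat := #|[set 'C_G(H) :* g | g in NGHK G H K]|.
Definition morO G H K : nat := #|[set g *: K | g in NGHK G H K]|.
Definition morFt G H K : nat := #|[set ('C_G(H) :* g) * K | g in NGHK G H K]|.

(* Moebius function of the poset of all subgroups of G (fuel = recursion
   on the order of the upper argument; every L strictly between is a
   subgroup of G as soon as K is). *)
Fixpoint mu_rec (n : nat) (H K : {set gT}) : rat :=
  match n with
  | 0 => 0%R
  | n'.+1 =>
    if H \subset K then
      (if H == K then 1
       else - \sum_(L : {set gT} | [&& group_set L, H \subset L & L \proper K])
                mu_rec n' H L)%R
    else 0%R
  end.
Definition mu (H K : {set gT}) : rat := mu_rec #|K|.+1 H K.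

Definition cmu G H K : rat :=
  ((#|'N_G(H)|%:R)^-1 * \sum_(L in K :^: G) mu H L)%R.

Definition is_weighting p G (mor : {set gT} -> {set gT} -> nat)
    (k : {set {set gT}} -> rat) : Prop :=
  forall H, H \in objs p G ->
    (\sum_(c in Xc p G) (mor H (repr c))%:R * k c = 1)%R.

Definition is_coweighting p G (mor : {set gT} -> {set gT} -> nat)
    (k : {set gT} -> rat) : Prop :=
  forall K, K \in objs p G ->
    (\sum_(H in objs p G) k H * (mor H K)%:R = 1)%R.

(* Statement of "k^ is a weighting, k_ a coweighting, and chi = e"
   (chi = sum of the values of the weighting = sum of those of the
   coweighting, Leinster). *)
Definition weight_data p G (mor : {set gT} -> {set gT} -> nat)
    (kw : {set {set gT}} -> rat) (kc : {set gT} -> rat) (e : rat) : Prop :=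
  [/\ is_weighting p G mor kw, is_coweighting p G mor kc,
      (\sum_(c in Xc p G) kw c = e)%R & (\sum_(K in objs p G) kc K = e)%R].

End Defs.

From mathcomp Require Import all_boot all_order all_algebra all_fingroup all_solvable.
From mathcomp Require Import ring zify.
Set Implicit Arguments. Unset Strict Implicit. Unset Printing Implicit Defensive.
Import GRing.Theory Num.Theory.
Local Open Scope group_scope.

(* In each of the five categories, |C(H,K)| a(H) b(K) = |N_G(H,K)| for class
   functions a, b built from 1, |C_G(H)|_p', |C_G(H)| and |K|: the morphism
   sets are orbit spaces of the free actions of C_G(H), of O^p(C_G(H)) (a
   p'-complement of the central Sylow subgroup Z(H)), of K, and of C_G(H) x K,
   whose double cosets have size |C_G(H)|_p' |K| because C_G(H)^x :&: K is
   Z(H)^x.  Counting conjugates, |N_G(H,K)| = |N_G(K)| #{L in [K] | H <= L}.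
   Every subgroup between two objects is an object, so the Moebius function of
   the subgroup lattice still inverts inclusion on objects, and the weighting
   and coweighting equations reduce to the two Moebius inversion identities.
   Both sums of values equal the double sum of b [mu] a over classes. *)

Section Moebius.
Variable gT : finGroupType.
Implicit Types (H K L M N : {set gT}).

Definition sub_interval H K : pred {set gT} :=
  fun L => [&& group_set L, H \subset L & L \subset K].

Lemma mu_rec_fuel n m H K :
  (#|K| < n)%N -> (#|K| < m)%N -> mu_rec n H K = mu_rec m H K.
Proof.
elim: n m H K => [|n IHn] [|m] H K //= ltKn ltKm.
case: ifP => // _; case: ifP => // _; congr (- _)%R.
apply: eq_bigr => L /and3P[_ _ /proper_card ltLK].
by apply: IHn; apply: leq_trans ltLK _.
Qed.

Lemma muE H K : mu H K =
  if H \subset K then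
    (if H == K then 1
     else - \sum_(L | [&& group_set L, H \subset L & L \proper K]) mu H L)%R
  else 0%R.
Proof.
rewrite {1}/mu /=; case: ifP => // _; case: ifP => // _; congr (- _)%R.
apply: eq_bigr => L /and3P[_ _ /proper_card ltLK].
exact: mu_rec_fuel.
Qed.

Lemma mu_nsub H K : ~~ (H \subset K) -> mu H K = 0%R.
Proof. by move=> nsHK; rewrite muE (negbTE nsHK). Qed.

Lemma mu_refl H : mu H H = 1%R.
Proof. by rewrite muE subxx eqxx. Qed.

Lemma muJ H K x : mu (H :^ x) (K :^ x) = mu H K.
Proof.
rewrite /mu cardJg; move: #|K|.+1 => n.
elim: n H K => [|n IHn] H K //=.
rewrite conjSg (inj_eq (@conjsg_inj _ x)).
case: ifP => // _; case: ifP => // _; congr (- _)%R.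
rewrite (reindex_inj (@conjsg_inj _ x)) /=.
apply: eq_big => [L|L _]; first by rewrite group_setJ conjSg properJ.
exact: IHn.
Qed.

Lemma sub_interval_trans H K M N :
  sub_interval H K M && sub_interval M K N =
  sub_interval H N M && sub_interval H K N.
Proof.
rewrite /sub_interval.
case gM: (group_set M); case gN: (group_set N) => //=; rewrite ?andbF //.
apply/idP/idP.
  case/andP=> /andP[sHM _] /andP[sMN sNK].
  by rewrite sHM sMN sNK (subset_trans sHM sMN).
case/andP=> /andP[sHM sMN] /andP[_ sNK].
by rewrite sHM sMN sNK (subset_trans sMN sNK).
Qed.

Lemma sub_interval_nsub H K : ~~ (H \subset K) -> sub_interval H K =1 xpred0.
Proof.
move=> nsHK L; apply: contraNF nsHK => /and3P[_ sHL sLK].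
exact: subset_trans sLK.
Qed.

Lemma sum_sub_interval_nsub H K (F : {set gT} -> rat) : ~~ (H \subset K) ->
  (\sum_(L | sub_interval H K L) F L = (H == K)%:R)%R.
Proof.
move=> nsHK; rewrite big_pred0; last exact: sub_interval_nsub.
by case: eqP nsHK => [-> | _]; rewrite ?subxx.
Qed.

Lemma sum_mu_interval H K : group_set K ->
  (\sum_(L | sub_interval H K L) mu H L = (H == K)%:R)%R.
Proof.
move=> gK; have [sHK | /sum_sub_interval_nsub//] := boolP (H \subset K).
case: eqP => [-> | neHK].
  rewrite (big_pred1 K) ?mu_refl // => L; rewrite /sub_interval.
  apply/idP/eqP => [/and3P[_ sKL sLK] | ->]; last by rewrite gK subxx.
  by apply/eqP; rewrite eqEsubset sLK sKL.
rewrite (bigD1 K) /=; last by rewrite /sub_interval gK sHK subxx.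
rewrite muE sHK; case: eqP => // _.
rewrite (eq_bigl (fun L => [&& group_set L, H \subset L & L \proper K])) ?addNr //.
move=> L; rewrite /sub_interval properEneq.
by case: (group_set L); case: (H \subset L); case: (L != K); case: (L \subset K).
Qed.

Definition mu_defect K M : rat :=
  (\sum_(N | sub_interval M K N) mu N K - (M == K)%:R)%R.

(* Exchanging the two sums reduces the inner one to [sum_mu_interval]. *)
Lemma sum_mu_defect H K : group_set H -> group_set K -> H \subset K ->
  (\sum_(M | sub_interval H K M) mu H M * mu_defect K M = 0)%R.
Proof.
move=> gH gK sHK; rewrite /mu_defect.
have HinHK : sub_interval H K H by rewrite /sub_interval gH subxx sHK.
have KinHK : sub_interval H K K by rewrite /sub_interval gK sHK subxx.
under eq_bigr do rewrite mulrBr mulr_sumr.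
have sum_delta :
    (\sum_(M | sub_interval H K M) mu H M * (M == K)%:R = mu H K)%R.
  rewrite (bigD1 K) //= eqxx mulr1 big1 ?addr0 // => M /andP[_ /negbTE->].
  exact: mulr0.
rewrite sumrB sum_delta.
rewrite (exchange_big_dep (sub_interval H K)) /=; last first.
  move=> M N /and3P[_ sHM _] /and3P[gN sMN sNK].
  by rewrite /sub_interval gN sNK (subset_trans sHM sMN).
rewrite (eq_bigr (fun N => (H == N)%:R * mu N K)%R); last first.
  move=> N iHKN; rewrite (eq_bigl (sub_interval H N)); last first.
    by move=> M; rewrite sub_interval_trans iHKN andbT.
  by case/and3P: iHKN => gN sHN _; rewrite -mulr_suml sum_mu_interval.
rewrite (bigD1 H) //= eqxx mul1r big1 ?addr0 ?subrr // => N /andP[_ neNH].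
by rewrite eq_sym (negbTE neNH) mul0r.
Qed.

(* The defect is triangular with respect to [sub_interval], so it vanishes
   by induction on [#|K| - #|H|]. *)
Lemma sum_mu_interval_dual H K : group_set H -> group_set K ->
  (\sum_(M | sub_interval H K M) mu M K = (H == K)%:R)%R.
Proof.
move=> gH gK; have [sHK | /sum_sub_interval_nsub//] := boolP (H \subset K).
apply/eqP; rewrite -subr_eq0; apply/eqP; rewrite -/(mu_defect K H).
have [n] := ubnP (#|K| - #|H|); elim: n H gH sHK => // n IHn H gH sHK lt.
have := sum_mu_defect gH gK sHK.
rewrite (bigD1 H) /=; last by rewrite /sub_interval gH subxx sHK.
rewrite mu_refl mul1r big1 ?addr0 // => M /andP[/and3P[gM sHM sMK] neMH].
have ltHM : (#|H| < #|M|)%N by rewrite proper_card // properEneq eq_sym neMH.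
rewrite IHn ?mulr0 //; have := subset_leq_card sMK; lia.
Qed.

End Moebius.

Section Objects.
Variables (gT : finGroupType) (G : {group gT}) (p : nat).
Implicit Types (H K L M : {set gT}).
Local Notation Ob := (objs p G).

Lemma objsP H :
  reflect [/\ group_set H, H \subset G, p.-group H & p.-Sylow('C_G(H)) 'Z(H)]
          (H \in Ob).
Proof. by rewrite inE; apply: and4P. Qed.

Lemma objs_group H : H \in Ob -> group_set H.
Proof. by case/objsP. Qed.

Lemma subcentJ H x : x \in G -> 'C_G(H :^ x) = 'C_G(H) :^ x.
Proof. by move=> xG; rewrite centJ -{1}(conjGid xG) conjIg. Qed.

Lemma card_subcentJ H x : x \in G -> #|'C_G(H :^ x)| = #|'C_G(H)|.
Proof. by move=> Gx; rewrite subcentJ ?cardJg. Qed.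

Lemma centerJ H x : 'Z(H :^ x) = 'Z(H) :^ x.
Proof. by rewrite /center centJ conjIg. Qed.

Lemma objsJ H x : H \in Ob -> x \in G -> H :^ x \in Ob.
Proof.
move=> /objsP[gH sHG pH sylZ] xG; pose HH := Group gH.
apply/objsP; split; first by rewrite group_setJ.
- by rewrite -(conjGid xG) conjSg.
- by rewrite /pgroup cardJg.
by rewrite subcentJ // centerJ (@pHallJ2 _ p [group of 'C_G(HH)] [group of 'Z(HH)]).
Qed.

Lemma objs_acts : [acts G, on Ob | 'Js].
Proof.
apply/actsP => x xG H /=; apply/idP/idP => [OHx | OH]; last exact: objsJ.
by rewrite -(conjsgK x H) objsJ ?groupV.
Qed.

Lemma center_normal_subcent H : H \subset G -> 'Z(H) <| 'C_G(H).
Proof.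
move=> sHG; rewrite /normal setSI //=.
by rewrite cents_norm // (subset_trans (subsetIr _ _)) // centS // center_sub.
Qed.

(* A Sylow p-subgroup of 'C_G(M) containing 'Z(M) centralizes H, hence lies
   in 'Z(H) <= M. *)
Lemma objs_convex H L M : H \in Ob -> L \in Ob -> group_set M ->
  H \subset M -> M \subset L -> M \in Ob.
Proof.
move=> /objsP[gH sHG _ sylZH] /objsP[gL sLG pL _] gM sHM sML.
pose HH := Group gH; pose MM := Group gM; pose LL := Group gL.
have sMG : M \subset G by apply: subset_trans sLG.
have pM : p.-group M by apply: (@pgroupS _ p LL MM).
apply/objsP; split=> //.
have sZC : 'Z(M) \subset 'C_G(MM) by apply: setSI.
have pZ : p.-group 'Z(M) := pgroupS (center_sub MM) pM.
have [P sylP sZP] :=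
  @Sylow_superset p gT [group of 'C_G(MM)] [group of 'Z(MM)] sZC pZ.
have sPCH : P \subset 'C_G(H).
  by apply: subset_trans (pHall_sub sylP) _; rewrite setIS // centS.
have sPZH : P \subset 'Z(H).
  have nZCH := center_normal_subcent sHG.
  rewrite (@sub_normal_Hall _ p [group of 'C_G(HH)] [group of 'Z(HH)] P sylZH nZCH sPCH).
  exact: pHall_pgroup sylP.
have sPZM : P \subset 'Z(M).
  rewrite subsetI (subset_trans (subset_trans sPZH (center_sub _)) sHM) /=.
  by apply: subset_trans (pHall_sub sylP) _; apply: subsetIr.
suff -> : 'Z(M) = P by [].
by apply/eqP; rewrite eqEsubset sZP sPZM.
Qed.

End Objects.

Section DoubleCosets.
Variables (gT : finGroupType) (A K : {group gT}).

Lemma dcoset_refl x : x \in A :* x * K.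
Proof. by rewrite -{1}[x]mulg1 mem_mulg ?rcoset_refl. Qed.

Lemma dcoset_sym x y : y \in A :* x * K -> x \in A :* y * K.
Proof.
case/mulsgP=> y1 k; rewrite mem_rcoset => Ay1 Kk ->.
apply/mulsgP; exists ((y1 * x^-1)^-1 * (y1 * k)) k^-1; rewrite ?groupV //.
  by rewrite mem_rcoset mulgK groupV.
by rewrite mulgA mulgK invMg invgK mulgKV.
Qed.

Lemma dcoset_sub x y : y \in A :* x * K -> A :* y * K \subset A :* x * K.
Proof.
move=> yAxK; have sy : [set y] \subset A :* x * K by rewrite sub1set.
apply: subset_trans (mulSg _ (mulgS _ sy)) _.
by rewrite !mulgA mulGid -!mulgA mulGid.
Qed.

Lemma dcoset_eq x y : y \in A :* x * K -> A :* y * K = A :* x * K.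
Proof.
move=> yAxK; apply/eqP; rewrite eqEsubset dcoset_sub //.
exact/dcoset_sub/dcoset_sym.
Qed.

Lemma card_dcosets (S : {set gT}) m :
  (forall x a k, x \in S -> a \in A -> k \in K -> a * x * k \in S) ->
  (forall x, x \in S -> #|A :* x * K| = m) ->
  (#|[set (A :* x * K)%g | x in S]| * m)%N = #|S|.
Proof.
move=> mulS cardS; pose D x := A :* x * K.
have sDS x : x \in S -> D x \subset S.
  move=> Sx; apply/subsetP=> y /mulsgP[y1 k]; rewrite mem_rcoset => Ay1 Kk ->.
  by rewrite -(mulgKV x y1) mulS.
rewrite -sum_nat_const -sum1_card.
rewrite (partition_big D (mem (D @: S))) /=; last by move=> x Sx; apply: imset_f.
apply: eq_bigr => B /imsetP[x0 Sx0 ->].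
rewrite -(cardS x0 Sx0) sum1_card; apply: eq_card => x /=.
rewrite [in RHS]unfold_in /=; apply/idP/andP => [Dx0x | [Sx /eqP <-]]; last first.
  exact: dcoset_refl.
by split; [apply: (subsetP (sDS x0 Sx0)) | apply/eqP; apply: dcoset_eq].
Qed.

End DoubleCosets.

(* When the Sylow p-subgroup Z of C is central, Schur-Zassenhaus gives
   C = Z x Q with Q a normal p'-Hall subgroup, and Q is O^p(C). *)
Lemma Op_res_central_Sylow (gT : finGroupType) (p : nat) (C Z : {group gT}) :
  p.-Sylow(C) Z -> C \subset 'C(Z) ->
  exists2 Q : {group gT}, Op_res p C = Q & p^'.-Hall(C) Q.
Proof.
move=> sylZ cCZ; have sZC := pHall_sub sylZ.
have nsZC : Z <| C by rewrite /normal sZC cents_norm.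
have [Q] := splitsP (SchurZassenhaus_split (pHall_Hall sylZ) nsZC).
case/complP => tiZQ defC.
have sQC : Q \subset C by rewrite -defC mulG_subr.
have hallQ : p^'.-Hall(C) Q.
  rewrite pHallE sQC /= -(eqn_pmul2l (cardG_gt0 Z)).
  by rewrite -TI_cardMg // defC (card_Hall sylZ) partnC.
exists Q => //; have nQC : C \subset 'N(Q).
  rewrite -defC mul_subG ?normG // cents_norm // centsC.
  exact: subset_trans cCZ.
apply/eqP; rewrite eqEsubset; apply/andP; split.
  apply: (bigcap_inf Q); rewrite /normal sQC nQC /=.
  by rewrite -defC quotientMidr quotient_pgroup ?(pHall_pgroup sylZ).
apply/bigcapsP => N /andP[nsNC pCN].
have nNQ : Q \subset 'N(N) := subset_trans sQC (normal_norm nsNC).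
have pQN : p.-group (Q / N) := pgroupS (quotientS _ sQC) pCN.
have p'QN : p^'.-group (Q / N) := quotient_pgroup _ (pHall_pgroup hallQ).
by rewrite -(quotient_sub1 nNQ) (card_le1_trivg (G := [group of Q / N])) ?(pnat_1 pQN p'QN).
Qed.

Section MorphismCounts.
Variables (gT : finGroupType) (G : {group gT}) (p : nat).
Implicit Types (H K : {set gT}).
Local Notation Ob := (objs p G).

Lemma NGHK_mul H (K : {group gT}) x a k : K \subset G ->
  x \in NGHK G H K -> a \in 'C_G(H) -> k \in K -> a * x * k \in NGHK G H K.
Proof.
move=> sKG /setIdP[Gx sHxK] /setIP[Ga cHa] Kk.
have Gk : k \in G := subsetP sKG k Kk.
rewrite inE !groupM //= !conjsgM (normP (subsetP (cent_sub H) a cHa)).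
by rewrite -(conjGid Kk) conjSg.
Qed.

(* 'C_G(H^x) :&: K is a p-subgroup of 'C_G(H^x) containing its Sylow
   p-subgroup 'Z(H^x). *)
Lemma conj_subcent_setI H K x : H \in Ob -> K \in Ob -> x \in NGHK G H K ->
  'C_G(H) :^ x :&: K = 'Z(H) :^ x.
Proof.
move=> OH OK /setIdP[Gx sHxK].
have /objsP[gHx _ _ sylZHx] := objsJ OH Gx.
have /objsP[gK _ pK _] := OK.
pose Hx := Group gHx; pose KK := Group gK.
rewrite -subcentJ // -centerJ.
have pCK : p.-group ('C_G(Hx) :&: KK) := @pgroupS _ p KK _ (subsetIr _ _) pK.
have sZCK : 'Z(Hx) \subset 'C_G(Hx) :&: KK.
  by rewrite subsetI (pHall_sub sylZHx) (subset_trans (center_sub _) sHxK).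
exact: (@sub_pHall _ p [group of 'Z(Hx)] [group of 'C_G(Hx)]
          [group of 'C_G(Hx) :&: KK] sylZHx pCK sZCK (subsetIl _ _)).
Qed.

Lemma card_NGHK_dcosets H (K A B : {group gT}) m :
  K \subset G -> A \subset 'C_G(H) -> B \subset K ->
  (forall x, x \in NGHK G H K -> #|A :* x * B| = m) ->
  (#|[set (A :* x * B)%g | x in NGHK G H K]| * m)%N = #|NGHK G H K|.
Proof.
move=> sKG sAC sBK; apply: card_dcosets => x a k Nx Aa Bk.
by apply: NGHK_mul => //; [apply: (subsetP sAC) | apply: (subsetP sBK)].
Qed.

Lemma card_subcent_dcoset H K x : H \in Ob -> K \in Ob -> x \in NGHK G H K ->
  #|'C_G(H) :* x * K| = (#|'C_G(H)|`_p^' * #|K|)%N.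
Proof.
move=> OH OK Nx; have /objsP[gH _ _ sylZH] := OH; have /objsP[gK _ _ _] := OK.
pose HH := Group gH; pose KK := Group gK; pose C := [group of 'C_G(HH)].
have -> : C :* x = x *: (C :^ x) by rewrite conjsgE lcosetKV.
rewrite -mulgA card_lcoset.
have := mul_cardG [group of C :^ x] KK.
rewrite /= (conj_subcent_setI OH OK Nx) !cardJg (@card_Hall _ p C [group of 'Z(HH)] sylZH).
rewrite -{1}(partnC p (cardG_gt0 C)) -mulnA mulnC => /eqP.
by rewrite eqn_pmul2r ?part_gt0 // => /eqP.
Qed.

Lemma morF_card H K : H \in Ob -> K \in Ob ->
  (morF G H K * #|'C_G(H)|)%N = #|NGHK G H K|.
Proof.
move=> /objsP[gH _ _ _] /objsP[gK sKG _ _]; pose HH := Group gH.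
rewrite /morF.
have -> : [set 'C_G(H) :* x | x in NGHK G H K] =
          [set ('C_G(HH) :* x) * (1%G : {group gT}) | x in NGHK G H K].
  by apply: eq_imset => x; rewrite mulg1.
apply: (@card_NGHK_dcosets H (Group gK)) => //; first exact: sub1G.
by move=> x _; rewrite mulg1 card_rcoset.
Qed.

Lemma morO_card H K : H \in Ob -> K \in Ob ->
  (morO G H K * #|K|)%N = #|NGHK G H K|.
Proof.
move=> _ /objsP[gK sKG _ _]; pose KK := Group gK.
rewrite /morO.
have -> : [set x *: K | x in NGHK G H K] =
          [set ((1%G : {group gT}) :* x) * KK | x in NGHK G H K].
  by apply: eq_imset => x; rewrite mul1g.
apply: (@card_NGHK_dcosets H KK) => //; first exact: sub1G.
by move=> x _; rewrite mul1g card_lcoset.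
Qed.

Lemma morL_card H K : H \in Ob -> K \in Ob ->
  (morL p G H K * #|'C_G(H)|`_p^')%N = #|NGHK G H K|.
Proof.
move=> /objsP[gH _ _ sylZH] /objsP[gK sKG _ _]; pose HH := Group gH.
have cCZ : 'C_G(HH) \subset 'C('Z(HH)).
  by rewrite (subset_trans (subsetIr _ _)) // centS // center_sub.
have [Q defQ hallQ] := @Op_res_central_Sylow gT p _ [group of 'Z(HH)] sylZH cCZ.
rewrite /morL defQ.
have -> : [set (Q : {set gT}) :* x | x in NGHK G H K] =
          [set (Q :* x) * (1%G : {group gT}) | x in NGHK G H K].
  by apply: eq_imset => x; rewrite mulg1.
rewrite -(card_Hall hallQ); apply: (@card_NGHK_dcosets H (Group gK)) => //.
- exact: pHall_sub hallQ.
- exact: sub1G.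
by move=> x _; rewrite mulg1 card_rcoset.
Qed.

Lemma morFt_card H K : H \in Ob -> K \in Ob ->
  (morFt G H K * (#|'C_G(H)|`_p^' * #|K|))%N = #|NGHK G H K|.
Proof.
move=> OH OK; have /objsP[gH _ _ _] := OH; have /objsP[gK sKG _ _] := OK.
pose HH := Group gH; pose KK := Group gK.
apply: (@card_NGHK_dcosets H KK [group of 'C_G(HH)] KK) => //.
by move=> x Nx; rewrite (card_subcent_dcoset OH OK Nx).
Qed.

End MorphismCounts.

Lemma natr_cardG_neq0 (gT : finGroupType) (H : {group gT}) :
  (#|H|%:R : rat) != 0%R.
Proof. by rewrite pnatr_eq0 -lt0n cardG_gt0. Qed.

Section ConjugacyClasses.
Variables (gT : finGroupType) (G : {group gT}) (p : nat).
Implicit Types (H K L M : {set gT}).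
Local Notation Ob := (objs p G).
Local Notation X := (Xc p G).

Lemma Xc_repr c : c \in X -> repr c \in Ob /\ c = repr c :^: G.
Proof.
case/imsetP=> M OM ->; have MGM : M \in M :^: G by rewrite -orbitJs orbit_refl.
have /imsetP[x Gx ->] := mem_repr M MGM.
split; first exact: objsJ.
by rewrite conjugates_conj lcoset_id.
Qed.

Lemma Xc_mem c L : c \in X -> L \in c -> exists2 x, x \in G & L = repr c :^ x.
Proof. by case/Xc_repr=> _ {1}->; case/imsetP=> x Gx ->; exists x. Qed.

Lemma big_Xc (R : Type) (idx : R) (op : Monoid.com_law idx) (F : {set gT} -> R) :
  \big[op/idx]_(c in X) \big[op/idx]_(K in c) F K = \big[op/idx]_(K in Ob) F K.
Proof.
have /and3P[/eqP covX tiX _] := orbit_partition (objs_acts G p).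
by rewrite -covX -big_trivIset.
Qed.

Lemma sum_objsJ (F : {set gT} -> rat) x : x \in G ->
  (\sum_(K in Ob) F (K :^ x) = \sum_(K in Ob) F K)%R.
Proof.
move=> Gx; rewrite [RHS](reindex_inj (@conjsg_inj _ x)) /=.
by apply: eq_bigl => K; rewrite (actsP (objs_acts G p) x Gx).
Qed.

(* Each conjugate of K is hit by exactly |N_G(K)| elements of G. *)
Lemma sum_conjg (F : {set gT} -> rat) K :
  (\sum_(g in G) F (K :^ g) = #|'N_G(K)|%:R * \sum_(L in K :^: G) F L)%R.
Proof.
rewrite (partition_big (fun g => K :^ g) (mem (K :^: G))) /=; last first.
  by move=> g Gg; apply: imset_f.
rewrite mulr_sumr; apply: eq_bigr => L /imsetP[x Gx ->].
rewrite (eq_bigr (fun _ => F (K :^ x))); last by move=> g /andP[_ /eqP->].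
rewrite sumr_const mulr_natl; congr (_ *+ _)%R.
rewrite -(card_rcoset _ x); apply: eq_card => g.
rewrite [LHS]unfold_in /= mem_rcoset in_setI groupMr ?groupV //.
case Gg: (g \in G) => //=.
apply/eqP/normP => [KgKx | nKgx]; first by rewrite conjsgM KgKx conjsgK.
by rewrite -[in RHS]nKgx -conjsgM mulgKV.
Qed.

Lemma sum_conjugates_const (F : {set gT} -> rat) K :
  (forall x, x \in G -> F (K :^ x) = F K) ->
  (\sum_(L in K :^: G) F L = #|G|%:R / #|'N_G(K)|%:R * F K)%R.
Proof.
move=> FJ; apply: (mulfI (natr_cardG_neq0 [group of 'N_G(K)])).
rewrite -sum_conjg (eq_bigr _ (fun x Gx => FJ x Gx)).
by rewrite sumr_const -mulr_natl; field; apply: natr_cardG_neq0.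
Qed.

End ConjugacyClasses.

Section ObjectSums.
Variables (gT : finGroupType) (G : {group gT}) (p : nat).
Implicit Types (H K L : {set gT}).
Local Notation Ob := (objs p G).
Local Open Scope ring_scope.

Lemma sum_objs_interval (F : {set gT} -> rat) H L : H \in Ob -> L \in Ob ->
  \sum_(K in Ob | (H \subset K) && (K \subset L)) F K =
  \sum_(K | sub_interval H L K) F K.
Proof.
move=> OH OL; apply: eq_bigl => K; apply/andP/and3P => [[OK /andP[]] | [gK sHK sKL]].
  by rewrite (objs_group OK).
by rewrite sHK sKL (objs_convex OH OL gK sHK sKL).
Qed.

Lemma sum_zeta_mu_objs H L : H \in Ob -> L \in Ob ->
  \sum_(K in Ob) (H \subset K)%:R * mu K L = (H == L)%:R.
Proof.
move=> OH OL; rewrite (bigID (fun K => (H \subset K) && (K \subset L))) /=.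
rewrite [X in _ + X]big1 ?addr0 => [|K /andP[_]]; last first.
  by rewrite negb_and => /orP[/negbTE-> | /mu_nsub->]; rewrite ?mul0r ?mulr0.
rewrite -(sum_mu_interval_dual (objs_group OH) (objs_group OL)) -sum_objs_interval //.
by apply: eq_bigr => K /andP[_ /andP[-> _]]; rewrite mul1r.
Qed.

Lemma sum_mu_zeta_objs H L : H \in Ob -> L \in Ob ->
  \sum_(K in Ob) (K \subset L)%:R * mu H K = (H == L)%:R.
Proof.
move=> OH OL; rewrite (bigID (fun K => (H \subset K) && (K \subset L))) /=.
rewrite [X in _ + X]big1 ?addr0 => [|K /andP[_]]; last first.
  by rewrite negb_and => /orP[/mu_nsub-> | /negbTE->]; rewrite ?mul0r ?mulr0.
rewrite -(sum_mu_interval H (objs_group OL)) -sum_objs_interval //.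
by apply: eq_bigr => K /andP[_ /andP[_ ->]]; rewrite mul1r.
Qed.

Lemma card_NGHK_sum H K :
  #|NGHK G H K|%:R = \sum_(g in G) (H \subset K :^ g)%:R :> rat.
Proof.
rewrite -sumr_const (reindex_inj invg_inj) /= big_mkcond [RHS]big_mkcond /=.
apply: eq_bigr => g _; rewrite inE groupV sub_conjg invgK.
by case: (g \in G); case: (_ \subset _).
Qed.

Lemma card_NGHK_conjugates H K :
  #|NGHK G H K|%:R = #|'N_G(K)|%:R * \sum_(L in K :^: G) (H \subset L)%:R :> rat.
Proof. by rewrite card_NGHK_sum (sum_conjg G (fun L => (H \subset L)%:R)). Qed.

End ObjectSums.

Section WeightingFromCounts.
Variables (gT : finGroupType) (G : {group gT}) (p : nat).
Implicit Types (H K L : {set gT}).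
Local Notation Ob := (objs p G).
Local Notation X := (Xc p G).
Local Open Scope ring_scope.

Variables (mor : {set gT} -> {set gT} -> nat) (a b : {set gT} -> rat).
Hypothesis aJ : forall H x, H \in Ob -> x \in G -> a (H :^ x) = a H.
Hypothesis bJ : forall H x, H \in Ob -> x \in G -> b (H :^ x) = b H.
Hypothesis morE : forall H K, H \in Ob -> K \in Ob ->
  (mor H K)%:R * a H * b K = #|NGHK G H K|%:R.

(* [1 \in NGHK G H H] makes the right-hand side of [morE] nonzero for K = H. *)
Lemma factors_neq0 H : H \in Ob -> (a H != 0) && (b H != 0).
Proof.
move=> OH; have NHH : (#|NGHK G H H|%:R : rat) != 0.
  rewrite pnatr_eq0 -lt0n card_gt0; apply/set0Pn.
  by exists 1%g; rewrite inE group1 conjsg1 subxx.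
by move: NHH; rewrite -(morE OH OH) !mulf_eq0 !negb_or => /andP[/andP[_ ->] ->].
Qed.

Lemma a_neq0 H : H \in Ob -> a H != 0.
Proof. by case/factors_neq0/andP. Qed.

Lemma b_neq0 H : H \in Ob -> b H != 0.
Proof. by case/factors_neq0/andP. Qed.

Definition mu_a K := \sum_(L in Ob) mu K L * a L.

Lemma mu_aJ K x : x \in G -> mu_a (K :^ x) = mu_a K.
Proof.
move=> Gx; rewrite /mu_a -(sum_objsJ p (fun L => mu (K :^ x) L * a L) Gx).
by apply: eq_bigr => L OL; rewrite muJ aJ.
Qed.

Lemma sum_cmu K : K \in Ob ->
  \sum_(d in X) cmu G K (repr d) * a (repr d) = (#|'N_G(K)|%:R)^-1 * mu_a K.
Proof.
move=> OK; rewrite /mu_a -(big_Xc G p) mulr_sumr; apply: eq_bigr => d Xd.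
have [Od defd] := Xc_repr Xd.
rewrite /cmu -defd -mulrA mulr_suml; congr (_ * _); apply: eq_bigr => L dL.
by have [x Gx ->] := Xc_mem Xd dL; rewrite aJ.
Qed.

Definition kw c := b (repr c) * \sum_(d in X) cmu G (repr c) (repr d) * a (repr d).

Definition kc K := (#|G|%:R)^-1 * a K * \sum_(H in Ob) b H * mu H K.

Lemma mor_weighting : is_weighting p G mor kw.
Proof.
move=> H OH.
have class_term c : c \in X ->
    (mor H (repr c))%:R * kw c = (a H)^-1 * \sum_(K in c) (H \subset K)%:R * mu_a K.
  rewrite /kw => Xc; have [Oc defc] := Xc_repr Xc; set K0 := repr c in Oc defc *.
  have -> : \sum_(K in c) (H \subset K)%:R * mu_a K =
            (\sum_(K in c) (H \subset K)%:R) * mu_a K0.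
    rewrite mulr_suml; apply: eq_bigr => K cK.
    by have [x Gx ->] := Xc_mem Xc cK; rewrite mu_aJ.
  have morK0 : (mor H K0)%:R * b K0 = (a H)^-1 * #|NGHK G H K0|%:R.
    by rewrite -morE //; field; apply: a_neq0.
  rewrite sum_cmu // mulrA morK0 card_NGHK_conjugates -defc.
  by field; rewrite natr_cardG_neq0 a_neq0.
rewrite (eq_bigr _ class_term) -mulr_sumr.
rewrite (big_Xc G p _ (fun K => (H \subset K)%:R * mu_a K)) /mu_a.
under eq_bigr do rewrite mulr_sumr.
rewrite exchange_big /= (eq_bigr (fun L => a L * (H == L)%:R)); last first.
  move=> L OL; rewrite -(sum_zeta_mu_objs OH OL) mulr_sumr.
  by apply: eq_bigr => K _; rewrite mulrA mulrC.
rewrite (bigD1 H) //= eqxx mulr1 big1 ?addr0 ?mulVf ?a_neq0 // => L /andP[_ neLH].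
by rewrite eq_sym (negbTE neLH) mulr0.
Qed.

Lemma mor_coweighting : is_coweighting p G mor kc.
Proof.
move=> K OK.
have sum_conj g : g \in G ->
    \sum_(H in Ob) (\sum_(H' in Ob) b H' * mu H' H) * (H \subset K :^ g)%:R
    = b (K :^ g).
  move=> Gg; under eq_bigr do rewrite mulr_suml.
  rewrite exchange_big /= (eq_bigr (fun H' => b H' * (H' == K :^ g)%:R)); last first.
    move=> H' OH'; rewrite -(sum_mu_zeta_objs OH' (objsJ OK Gg)) mulr_sumr.
    by apply: eq_bigr => H _; rewrite mulrCA mulrC mulrA.
  rewrite (bigD1 (K :^ g)) ?objsJ //= eqxx mulr1 big1 ?addr0 // => H /andP[_ neH].
  by rewrite (negbTE neH) mulr0.
rewrite (eq_bigr (fun H => (#|G|%:R)^-1 * (b K)^-1 *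
    ((\sum_(H' in Ob) b H' * mu H' H) * \sum_(g in G) (H \subset K :^ g)%:R))); last first.
  move=> H OH; rewrite /kc -card_NGHK_sum -morE //.
  by field; rewrite b_neq0 ?natr_cardG_neq0.
rewrite -mulr_sumr; under eq_bigr do rewrite mulr_sumr.
rewrite exchange_big /= (eq_bigr _ sum_conj) (eq_bigr (fun=> b K)) => [|g Gg].
  by rewrite sumr_const -mulr_natr; field; rewrite b_neq0 ?natr_cardG_neq0.
exact: bJ.
Qed.

Lemma sum_kw :
  \sum_(c in X) kw c
  = \sum_(c in X) \sum_(d in X) b (repr c) * cmu G (repr c) (repr d) * a (repr d).
Proof.
by apply: eq_bigr => c _; rewrite /kw mulr_sumr; apply: eq_bigr => d _; rewrite mulrA.
Qed.

Lemma sum_kc :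
  \sum_(K in Ob) kc K
  = \sum_(c in X) \sum_(d in X) b (repr c) * cmu G (repr c) (repr d) * a (repr d).
Proof.
have -> : \sum_(K in Ob) kc K = (#|G|%:R)^-1 * \sum_(H in Ob) b H * mu_a H.
  rewrite /kc; under eq_bigr do rewrite -mulrA mulr_sumr.
  rewrite -mulr_sumr exchange_big /=; congr (_ * _); apply: eq_bigr => H _.
  by rewrite /mu_a mulr_sumr; apply: eq_bigr => K _; ring.
rewrite -(big_Xc G p _ (fun H => b H * mu_a H)) mulr_sumr; apply: eq_bigr => c Xc.
have [Oc defc] := Xc_repr Xc; set K0 := repr c in Oc defc *.
rewrite {1}defc sum_conjugates_const => [|x Gx]; last by rewrite bJ ?mu_aJ.
under eq_bigr do rewrite -mulrA; rewrite -mulr_sumr sum_cmu //.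
by field; rewrite !natr_cardG_neq0.
Qed.

Theorem mor_weight_data : weight_data p G mor
  (fun c => b (repr c) * \sum_(d in X) cmu G (repr c) (repr d) * a (repr d))
  (fun K => (#|G|%:R)^-1 * a K * \sum_(H in Ob) b H * mu H K)
  (\sum_(c in X) \sum_(d in X) b (repr c) * cmu G (repr c) (repr d) * a (repr d)).
Proof.
split; [exact: mor_weighting | exact: mor_coweighting | exact: sum_kw | exact: sum_kc].
Qed.

End WeightingFromCounts.

Lemma eq_weight_data (gT : finGroupType) p (G : {set gT}) mor kw kw' kc kc'
    (e e' : rat) :
  kw =1 kw' -> kc =1 kc' -> e = e' ->
  weight_data p G mor kw kc e -> weight_data p G mor kw' kc' e'.
Proof.
move=> eq_kw eq_kc <- [wkw ckc ekw ekc]; split.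
- by move=> H OH; rewrite -[RHS](wkw H OH); apply: eq_bigr => c _; rewrite eq_kw.
- by move=> K OK; rewrite -[RHS](ckc K OK); apply: eq_bigr => H _; rewrite eq_kc.
- by rewrite -ekw; apply: eq_bigr => c _; rewrite eq_kw.
- by rewrite -ekc; apply: eq_bigr => K _; rewrite eq_kc.
Qed.

Theorem theorem8p3 (gT : finGroupType) (G : {group gT}) (p : nat) :
  prime p ->
  let X := Xc p G in
  let O := objs p G in
  let sz (H : {set gT}) : rat := (#|H|%:R)%R in
  let cp (K : {set gT}) : rat := ((#|'C_G(K)|`_p^')%N%:R)%R in
  let cf (K : {set gT}) : rat := (#|'C_G(K)|%:R)%R in
  let iG : rat := ((#|G|%:R)^-1)%R in
  (* (i) T^c_G *)
  weight_data p G (morT G)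
    (fun c => \sum_(d in X) cmu G (repr c) (repr d))%R
    (fun K => iG * \sum_(H in O) mu H K)%R
    (\sum_(c in X) \sum_(d in X) cmu G (repr c) (repr d))%R
  (* (ii) L^c_G *)
  /\ weight_data p G (morL p G)
    (fun c => \sum_(d in X) cmu G (repr c) (repr d) * cp (repr d))%R
    (fun K => iG * cp K * \sum_(H in O) mu H K)%R
    (\sum_(c in X) \sum_(d in X) cmu G (repr c) (repr d) * cp (repr d))%R
  (* (iii) F^c_G *)
  /\ weight_data p G (morF G)
    (fun c => \sum_(d in X) cmu G (repr c) (repr d) * cf (repr d))%R
    (fun K => iG * cf K * \sum_(H in O) mu H K)%R
    (\sum_(c in X) \sum_(d in X) cmu G (repr c) (repr d) * cf (repr d))%R
  (* (iv) O^c_G *)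
  /\ weight_data p G (morO G)
    (fun c => sz (repr c) * \sum_(d in X) cmu G (repr c) (repr d))%R
    (fun K => iG * \sum_(H in O) sz H * mu H K)%R
    (\sum_(c in X) \sum_(d in X) sz (repr c) * cmu G (repr c) (repr d))%R
  (* (v) tilde F^c_G *)
  /\ weight_data p G (morFt G)
    (fun c => sz (repr c) * \sum_(d in X) cmu G (repr c) (repr d) * cp (repr d))%R
    (fun K => iG * cp K * \sum_(H in O) sz H * mu H K)%R
    (\sum_(c in X) \sum_(d in X)
        sz (repr c) * cmu G (repr c) (repr d) * cp (repr d))%R.
Proof.
move=> _ X O sz cp cf iG; pose one (H : {set gT}) : rat := 1%R.
have oneJ H x : H \in O -> x \in G -> one (H :^ x) = one H by [].
have szJ H x : H \in O -> x \in G -> sz (H :^ x) = sz H by rewrite /sz cardJg.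
have cpJ H x : H \in O -> x \in G -> cp (H :^ x) = cp H.
  by rewrite /cp => _ /(card_subcentJ H)->.
have cfJ H x : H \in O -> x \in G -> cf (H :^ x) = cf H.
  by rewrite /cf => _ /(card_subcentJ H)->.
split; [|split; [|split; [|split]]].
- apply: (eq_weight_data _ _ _ (mor_weight_data oneJ oneJ _)).
  + by move=> c /=; rewrite mul1r; apply: eq_bigr => d _; rewrite mulr1.
  + by move=> K /=; rewrite mulr1; congr (_ * _)%R; apply: eq_bigr => H _; rewrite mul1r.
  + by apply: eq_bigr => c _; apply: eq_bigr => d _; rewrite mul1r mulr1.
  + by move=> H K _ _; rewrite !mulr1.
- apply: (eq_weight_data _ _ _ (mor_weight_data cpJ oneJ _)).
  + by move=> c /=; rewrite mul1r.
  + by move=> K /=; congr (_ * _)%R; apply: eq_bigr => H _; rewrite mul1r.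
  + by apply: eq_bigr => c _; apply: eq_bigr => d _; rewrite mul1r.
  + by move=> H K OH OK; rewrite mulr1 -natrM morL_card.
- apply: (eq_weight_data _ _ _ (mor_weight_data cfJ oneJ _)).
  + by move=> c /=; rewrite mul1r.
  + by move=> K /=; congr (_ * _)%R; apply: eq_bigr => H _; rewrite mul1r.
  + by apply: eq_bigr => c _; apply: eq_bigr => d _; rewrite mul1r.
  + by move=> H K OH OK; rewrite mulr1 -natrM (morF_card OH OK).
- apply: (eq_weight_data _ _ _ (mor_weight_data oneJ szJ _)).
  + by move=> c /=; congr (_ * _)%R; apply: eq_bigr => d _; rewrite mulr1.
  + by move=> K /=; rewrite mulr1.
  + by apply: eq_bigr => c _; apply: eq_bigr => d _; rewrite mulr1.
  + by move=> H K OH OK; rewrite mulr1 -natrM (morO_card OH OK).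
- apply: (eq_weight_data _ _ _ (mor_weight_data cpJ szJ _)) => //.
  by move=> H K OH OK; rewrite -mulrA -!natrM morFt_card.
Qed.
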